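(* Let $q\geq 3$ be an odd prime power, $m\geq 2$, and $\delta_2=(q-1)q^{m-1}-q^{\lfloor\frac{2m-1}{3}\rfloor}-q^{\lfloor\frac{m-1}{3}\rfloor}-1$. Then the $q$-cyclotomic coset $C_{\delta_2}^{(q,q^m-1)}$ has size $m$ if $3\nmid m$ and size $\frac{m}{3}$ if $3\mid m$.
   Context: $C_i^{(q,N)}=\{i,iq,iq^2,\ldots\}\bmod N$ denotes the $q$-cyclotomic coset of $i$ modulo $N$. *)

From mathcomp Require Import all_boot.
Set Implicit Arguments. Unset Strict Implicit. Unset Printing Implicit Defensive.

(* The q-cyclotomic coset of i modulo N: C_i^{(q,N)} = { i q^j mod N : j >= 0 },
   represented as a duplicate-free list of residues in [0, N).  Since the
   sequence (i q^j mod N)_j takes at most N distinct values and is eventually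
   periodic with preperiod + period <= N, the exponents j < N already produce
   every element of the coset. *)
Definition cyclotomic_coset (q N i : nat) : seq nat :=
  undup [seq (i * q ^ j) %% N | j <- iota 0 N].

Definition prime_power (q : nat) : Prop :=
  exists p k, prime p /\ 0 < k /\ q = p ^ k.

Definition delta2 (q m : nat) : nat :=
  (q - 1) * q ^ (m - 1) - q ^ ((2 * m - 1) %/ 3) - q ^ ((m - 1) %/ 3) - 1.

(* Let w = q^(m-1) + q^a + q^b with a = (2m-1)/3 and b = (m-1)/3, so that
   delta2 q m + w = q^m - 1.  Then delta2 * q^j and delta2 agree modulo q^m - 1
   exactly when w * q^j and w do, so both cosets have the same size.
   Multiplying w by q^j rotates its exponents modulo m; as w and all its
   rotations are base-q numbers below q^m - 1 with digits at most 2 < q,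
   w * q^j = w forces the rotation by j to permute the exponents, and summing
   them gives m | 3j.  Conversely w * q^m = w, and for m = 3k the rotation by k
   maps the exponents 3k-1, 2k-1, k-1 onto themselves. *)
From mathcomp Require Import all_boot zify.
Set Implicit Arguments. Unset Strict Implicit.

Section PeriodicOrbit.

Variables (T : eqType) (g : nat -> T) (t : nat).
Hypothesis t_gt0 : 0 < t.
Hypothesis g_periodic : forall j, g (j + t) = g j.
Hypothesis g_inj : {in iota 0 t &, injective g}.

Lemma periodic_modn j : g j = g (j %% t).
Proof.
rewrite {1}(divn_eq j t) addnC.
elim: (j %/ t) => [|k IHk]; first by rewrite mul0n addn0.
by rewrite mulSn [t + _]addnC addnA g_periodic.
Qed.

Lemma size_undup_periodic n : t <= n -> size (undup [seq g j | j <- iota 0 n]) = t.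
Proof.
move=> le_tn; rewrite -[RHS](size_iota 0 t) -(size_map g (iota 0 t)).
apply/perm_size/uniq_perm; first exact: undup_uniq.
  by rewrite (map_inj_in_uniq g_inj) iota_uniq.
move=> x; rewrite mem_undup; apply/mapP/mapP => -[j]; rewrite mem_iota add0n => lt_j ->.
- by exists (j %% t); [rewrite mem_iota ltn_pmod | exact: periodic_modn].
- by exists j => //; rewrite mem_iota (leq_trans lt_j).
Qed.

End PeriodicOrbit.

Lemma size_cyclotomic_coset q N i t :
  0 < t <= N -> i * q ^ t = i %[mod N] ->
  (forall j, 0 < j < t -> i * q ^ j != i %[mod N]) ->
  size (cyclotomic_coset q N i) = t.
Proof.
move=> /andP[t_gt0 le_tN] per_t min_t.
pose g j := i * q ^ j %% N.
have g_add j k : g (j + k) = g j * q ^ k %% N by rewrite /g expnD mulnA modnMml.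
have g_periodic j : g (j + t) = g j by rewrite addnC g_add /g per_t modnMml.
apply: (size_undup_periodic t_gt0 g_periodic) => // j1 j2.
rewrite !mem_iota !add0n /= => lt_j1 lt_j2 g_j12.
wlog le_j12 : j1 j2 lt_j1 lt_j2 g_j12 / j1 <= j2.
  by move=> sym; case/orP: (leq_total j1 j2) => ?; [|symmetry]; apply: sym.
apply/eqP; rewrite eqn_leq le_j12 leqNgt; apply/negP => lt_j12.
have /min_t/negP : 0 < j2 - j1 < t by lia.
apply; have g_d : g (j2 - j1) = g 0.
  have -> : j2 - j1 = j2 + (t - j1) - t by lia.
  rewrite -[g 0](g_periodic 0) -g_periodic subnK; last lia.
  by rewrite g_add -g_j12 -g_add subnKC // ltnW.
by move: g_d; rewrite /g expn0 muln1 => ->.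
Qed.

Definition sum_pow (q : nat) (s : seq nat) : nat := sumn [seq q ^ x | x <- s].

Lemma sum_pow_split q s :
  sum_pow q s = count_mem 0 s + q * sum_pow q [seq x.-1 | x <- s & x != 0].
Proof.
elim: s => [|[|x] s IHs] /=; rewrite /sum_pow /= -!/(sum_pow _ _) ?IHs ?muln0 //.
by rewrite expnS mulnDr add0n addnCA.
Qed.

Lemma count_mem_pred_pos e s :
  count_mem e [seq x.-1 | x <- s & x != 0] = count_mem e.+1 s.
Proof. by elim: s => [|[|x] s IHs] //=; rewrite IHs. Qed.

Lemma sum_pow_digit q s e :
  (forall x, count_mem x s < q) -> sum_pow q s %/ q ^ e %% q = count_mem e s.
Proof.
move=> lt_count; have q_gt0 : 0 < q := leq_ltn_trans (leq0n _) (lt_count 0).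
elim: e s lt_count => [|e IHe] s lt_count.
  by rewrite expn0 divn1 sum_pow_split addnC mulnC modnMDl modn_small.
rewrite expnS divnMA sum_pow_split addnC mulnC divnMDl // (divn_small (lt_count 0)) addn0.
by rewrite IHe -?count_mem_pred_pos // => x; rewrite count_mem_pred_pos.
Qed.

Lemma sum_pow_inj q s1 s2 :
  (forall x, count_mem x s1 < q) -> (forall x, count_mem x s2 < q) ->
  sum_pow q s1 = sum_pow q s2 -> perm_eq s1 s2.
Proof.
move=> lt_s1 lt_s2 eq_sum; apply/allP => x _ /=.
by rewrite -(sum_pow_digit x lt_s1) -(sum_pow_digit x lt_s2) eq_sum.
Qed.

Lemma expn_modnB1 q m k : 0 < q -> q ^ k = q ^ (k %% m) %[mod q ^ m - 1].
Proof.
move=> q_gt0; have qm_1 : q ^ m = 1 %[mod q ^ m - 1].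
  have qm_eq : q ^ m = q ^ m - 1 + 1 by rewrite subnK // expn_gt0 q_gt0.
  by rewrite {1}qm_eq modnDl.
rewrite {1}(divn_eq k m) expnD [_ * m]mulnC expnM -modnMml -modnXm qm_1.
by rewrite modnXm exp1n modnMml mul1n.
Qed.

Definition cshift (m j : nat) (s : seq nat) : seq nat := [seq (x + j) %% m | x <- s].

Lemma sum_pow_cshift q m j s :
  0 < q -> sum_pow q s * q ^ j = sum_pow q (cshift m j s) %[mod q ^ m - 1].
Proof.
move=> q_gt0; elim: s => [|x s IHs] //=.
rewrite /sum_pow /= -!/(sum_pow _ _) mulnDl -expnD -modnDm IHs (expn_modnB1 m _ q_gt0).
by rewrite modnDm.
Qed.

Lemma sumn_cshift m j s : sumn (cshift m j s) = sumn s + size s * j %[mod m].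
Proof.
elim: s => [|x s IHs] //=; rewrite -modnDm IHs modn_mod modnDm.
by congr (_ %% _); rewrite mulSn; lia.
Qed.

Lemma perm_cshift_dvdn m j s : perm_eq (cshift m j s) s -> m %| size s * j.
Proof.
move=> /perm_sumn sumn_shift; have := sumn_cshift m j s; rewrite sumn_shift => /eqP.
by rewrite -{1}[sumn s]addn0 eqn_modDl mod0n eq_sym.
Qed.

Lemma count_mem3_le2 (x y z e : nat) : x != z -> count_mem e [:: x; y; z] <= 2.
Proof.
move=> neq_xz /=; case: (eqVneq x e) => [<-|_]; last by case: (y == e); case: (z == e).
by rewrite [z == x]eq_sym (negPf neq_xz); case: (y == x).
Qed.

Lemma sum_pow3_lt q m x y z : 3 <= q -> x < m -> y < m -> z < m -> x != z ->
  sum_pow q [:: x; y; z] < q ^ m - 1.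
Proof.
move=> q_ge3 lt_xm lt_ym lt_zm neq_xz.
have pow_le e : e < m -> q * q ^ e <= q ^ m by move=> lt_em; rewrite -expnS leq_pexp2l //; lia.
have pow_lt u v w : u.+1 < m -> v < m -> w < m -> q ^ u + q ^ v + q ^ w < q ^ m - 1.
  move=> lt_um lt_vm lt_wm; have := pow_le _ lt_um; have := pow_le _ lt_vm.
  have := pow_le _ lt_wm; have := pow_le _ (ltnW lt_um); rewrite expnS.
  have : 0 < q ^ u by rewrite expn_gt0 (leq_trans _ q_ge3).
  nia.
rewrite /sum_pow /= addn0 addnA.
have [lt_x1m|lt_z1m] : x.+1 < m \/ z.+1 < m by lia.
- exact: pow_lt.
- by have := pow_lt z y x lt_z1m lt_ym lt_xm; lia.
Qed.

Lemma sum_pow3_fixed_dvdn q m x y z j :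
  3 <= q -> x < m -> y < m -> z < m -> x != z ->
  sum_pow q [:: x; y; z] * q ^ j = sum_pow q [:: x; y; z] %[mod q ^ m - 1] -> m %| 3 * j.
Proof.
move=> q_ge3 lt_xm lt_ym lt_zm neq_xz.
have m_gt0 : 0 < m by apply: leq_ltn_trans lt_xm.
have shift_lt u : (u + j) %% m < m by rewrite ltn_pmod.
have neq_shift : (x + j) %% m != (z + j) %% m by rewrite eqn_modDr !modn_small.
have count_lt (u v w : nat) : u != w -> forall e, count_mem e [:: u; v; w] < q.
  by move=> neq_uw e; apply: leq_ltn_trans (count_mem3_le2 v e neq_uw) q_ge3.
rewrite (sum_pow_cshift m); last by apply: leq_trans q_ge3.
rewrite /= (modn_small (sum_pow3_lt q_ge3 (shift_lt x) (shift_lt y) (shift_lt z) neq_shift)).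
rewrite (modn_small (sum_pow3_lt q_ge3 lt_xm lt_ym lt_zm neq_xz)) => /sum_pow_inj shift_perm.
by apply: (@perm_cshift_dvdn m j [:: x; y; z]); apply: shift_perm; apply: count_lt.
Qed.

Lemma eqn_modM_compl x y N c :
  x + y = N -> (x * c == x %[mod N]) = (y * c == y %[mod N]).
Proof.
move=> sum_xy; rewrite -(eqn_modDr (y * c + y)).
have -> : x * c + (y * c + y) = y + c * N by rewrite -sum_xy; nia.
have -> : x + (y * c + y) = y * c + N by rewrite -sum_xy; lia.
by rewrite addnC modnMDl modnDr eq_sym.
Qed.

Definition delta2_exps (m : nat) : seq nat := [:: m - 1; (2 * m - 1) %/ 3; (m - 1) %/ 3].

Lemma delta2_add_sum_pow q m :
  3 <= q -> 2 <= m -> delta2 q m + sum_pow q (delta2_exps m) = q ^ m - 1.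
Proof.
move=> q_ge3 m_ge2; rewrite /delta2 /sum_pow /=.
set a := (2 * m - 1) %/ 3; set b := (m - 1) %/ 3.
have q_m : q ^ m = q * q ^ (m - 1) by rewrite -expnS; congr (_ ^ _); lia.
have le_a : q ^ a <= q ^ (m - 1) by rewrite leq_pexp2l /a; lia.
have lt_b : q ^ b < q ^ (m - 1) by rewrite ltn_exp2l /b; lia.
by rewrite q_m; nia.
Qed.

Lemma perm_cshift_delta2_exps k :
  0 < k -> perm_eq (cshift (k * 3) k (delta2_exps (k * 3))) (delta2_exps (k * 3)).
Proof.
move=> k_gt0; have -> : delta2_exps (k * 3) = [:: k * 3 - 1; k * 2 - 1; k - 1].
  by rewrite /delta2_exps; congr [:: _; _; _]; lia.
have -> : cshift (k * 3) k [:: k * 3 - 1; k * 2 - 1; k - 1] =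
          rot 2 [:: k * 3 - 1; k * 2 - 1; k - 1].
  rewrite /cshift /=; congr [:: _; _; _]; last by rewrite modn_small; lia.
  - by rewrite (_ : k * 3 - 1 + k = k - 1 + k * 3) ?modnDr ?modn_small; lia.
  - by rewrite modn_small; lia.
by rewrite perm_rot.
Qed.

Lemma dvdn_mul3_ge m j :
  0 < j -> m %| 3 * j -> (if 3 %| m then m %/ 3 else m) <= j.
Proof.
case: ifP => [/dvdnP[k ->] | m_3] j_gt0.
  by rewrite mulnK // mulnC dvdn_pmul2l // => /dvdn_leq; apply.
have m_coprime3 : coprime m 3 by rewrite coprime_sym prime_coprime ?m_3.
by rewrite Gauss_dvdr // => /dvdn_leq; apply.
Qed.

Theorem lemma19 (q m : nat) :
  prime_power q -> odd q -> 3 <= q -> 2 <= m ->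
  size (cyclotomic_coset q (q ^ m - 1) (delta2 q m)) =
    (if 3 %| m then m %/ 3 else m).
Proof.
move=> _ _ q_ge3 m_ge2.
have q_gt0 : 0 < q by apply: leq_trans q_ge3.
set w := sum_pow q (delta2_exps m).
have fixedE j : (delta2 q m * q ^ j == delta2 q m %[mod q ^ m - 1]) =
                (w * q ^ j == w %[mod q ^ m - 1]).
  exact/eqn_modM_compl/delta2_add_sum_pow.
have fixed_dvdn j : w * q ^ j = w %[mod q ^ m - 1] -> m %| 3 * j.
  by apply: sum_pow3_fixed_dvdn => //=; lia.
have w_period : w * q ^ (if 3 %| m then m %/ 3 else m) = w %[mod q ^ m - 1].
  case: ifP => [/dvdnP[k def_m] | _].
    have k_gt0 : 0 < k by lia.
    rewrite (sum_pow_cshift m) // /w /sum_pow def_m mulnK //.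
    by rewrite (perm_sumn (perm_map _ (perm_cshift_delta2_exps k_gt0))).
  by rewrite -modnMmr (expn_modnB1 m m q_gt0) modnn expn0 modnMmr muln1.
apply: size_cyclotomic_coset.
- have := ltn_expl m (ltnW q_ge3); case: ifP => [/dvdnP[k def_m] | _]; lia.
- by apply/eqP; rewrite fixedE; apply/eqP.
- move=> j /andP[j_gt0 lt_j]; rewrite fixedE; apply/negP => /eqP /fixed_dvdn.
  by move/(dvdn_mul3_ge j_gt0); rewrite leqNgt lt_j.
Qed.
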